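(* Let $\mathbb{M}$ be a weight sequence with sequence of quotients $\mathbf{m}$. Then (i) $\alpha(\nu_{\mathbf{m}})\ge\alpha(\omega_{\mathbb{M}})$, and (ii) $\beta(\nu_{\mathbf{m}})=\beta(\omega_{\mathbb{M}})$.
   Context: A weight sequence is $\mathbb{M}=(M_p)_{p\in\mathbb{N}_0}$ of positive reals with $M_0=1$, $M_p^2\le M_{p-1}M_{p+1}$ ($p\ge1$) and $M_p^{1/p}\to\infty$; $m_p=M_{p+1}/M_p$. $\omega_{\mathbb{M}}(t):=\sup_{p\in\mathbb{N}_0}\log(t^p/M_p)$ for $t>0$, $\omega_{\mathbb{M}}(0)=0$; $\nu_{\mathbf{m}}(t):=\#\{j\in\mathbb{N}_0:m_j\le t\}$ for $t>0$. For a positive measurable $f$ on $[A,\infty)$: $\alpha(f):=\inf\{\alpha:\exists C_\alpha>0\ \forall\Lambda>1,\ \limsup_{x\to\infty}\sup_{\lambda\in[1,\Lambda]}\frac{f(\lambda x)}{\lambda^{\alpha}f(x)}\le C_\alpha\}$ and $\beta(f):=\sup\{\beta:\exists D_\beta>0\ \forall\Lambda>1,\ \liminf_{x\to\infty}\inf_{\lambda\in[1,\Lambda]}\frac{f(\lambda x)}{\lambda^{\beta}f(x)}\ge D_\beta\}$ (with $\inf\emptyset=\infty$); for $\omega_{\mathbb{M}}$ and $\nu_{\mathbf{m}}$ these are computed on any interval $[A,\infty)$, $A>0$, where the function is positive. *)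

From HB Require Import structures.
From mathcomp Require Import all_boot all_order all_algebra.
From mathcomp Require Import all_classical all_reals all_analysis.
Set Implicit Arguments. Unset Strict Implicit. Unset Printing Implicit Defensive.
Import Order.TTheory GRing.Theory Num.Theory.
Import numFieldNormedType.Exports.
Local Open Scope classical_set_scope.
Local Open Scope ring_scope.

Definition weight_seq (R : realType) (M : nat -> R) : Prop :=
  [/\ M 0%N = 1,
      (forall p, 0 < M p),
      (forall p, (1 <= p)%N -> M p ^+ 2 <= M p.-1 * M p.+1)
    & (fun p : nat => M p `^ (p%:R)^-1) @ \oo --> +oo].

Definition quot_seq (R : realType) (M : nat -> R) : nat -> R :=
  fun p => M p.+1 / M p.

Definition omegaM (R : realType) (M : nat -> R) (t : R) : R :=
  if 0 < t then sup [set ln (t ^+ p / M p) | p in [set: nat]] else 0.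

Definition nu_m (R : realType) (m : nat -> R) (t : R) : R :=
  fine (counting [set j : nat | m j <= t]).

(* The set of admissible alpha's:
   exists C > 0, forall Lambda > 1,
   limsup_{x -> oo} sup_{lambda in [1,Lambda]} f(lambda x)/(lambda^alpha f(x)) <= C,
   with "limsup_{x->oo} g(x) <= C" written out as
   forall eps > 0, eventually (for x near +oo) g(x) <= C + eps,
   and "sup_{lambda in [1,Lambda]} h(lambda) <= c" as forall lambda in [1,Lambda], h lambda <= c. *)
Definition alpha_set (R : realType) (f : R -> R) : set R :=
  [set a : R | exists2 C : R, 0 < C &
     forall Lam : R, 1 < Lam -> forall eps : R, 0 < eps ->
       \forall x \near +oo%R, forall lam : R, 1 <= lam <= Lam ->
          f (lam * x) / (lam `^ a * f x) <= C + eps].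

(* The set of admissible beta's (liminf of the inf >= D, written out). *)
Definition beta_set (R : realType) (f : R -> R) : set R :=
  [set b : R | exists2 D : R, 0 < D &
     forall Lam : R, 1 < Lam -> forall eps : R, 0 < eps ->
       \forall x \near +oo%R, forall lam : R, 1 <= lam <= Lam ->
          D - eps <= f (lam * x) / (lam `^ b * f x)].

(* alpha(f) = inf of alpha_set (inf of empty = +oo), beta(f) = sup of beta_set *)
Definition alpha_idx (R : realType) (f : R -> R) : \bar R :=
  ereal_inf [set a%:E | a in alpha_set f].
Definition beta_idx (R : realType) (f : R -> R) : \bar R :=
  ereal_sup [set b%:E | b in beta_set f].

(* Write f = omega_M and g = nu_m.  The supremum defining omega_M(t) is attained at
   p = nu_m(t), because t^p/M_p increases exactly while m_p <= t; comparing the maximal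
   terms at t and l t gives, for l >= 1,
     f(t) + g(t) ln l <= f(l t) <= f(t) + g(l t) ln l,
   a discrete form of omega_M(t) = \int^t nu_m(s)/s ds.  Only these inequalities, the
   monotonicity of g and g -> +oo are used afterwards.  The left one gives
   g(t) ln mu <= f(mu t); iterating the right one shows that f <= c g eventually as soon
   as g (or f) at least doubles under t |-> mu t, which a positive lower index provides.
   Hence lower dilation bounds pass between f and g, giving beta(f) = beta(g), while an
   upper bound g(l t) <= C l^a g(t) yields f(l t) <= f(t) + C l^a g(t) ln l, so that
   ln l <= l^d/d turns it into an upper bound for f with exponent a + d. *)

From mathcomp Require Import all_boot all_order all_algebra.
From mathcomp Require Import all_classical all_reals all_analysis.
From mathcomp Require Import lra ring.
Set Implicit Arguments. Unset Strict Implicit. Unset Printing Implicit Defensive.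
Import Order.TTheory GRing.Theory Num.Theory Order.NatMonotonyTheory.
Local Open Scope classical_set_scope.
Local Open Scope ring_scope.

Section RealFacts.
Context {R : realType}.

Lemma exists_powR_ge (b c : R) : 0 < b -> exists2 mu, 1 < mu & c <= mu `^ b.
Proof.
move=> b0; set z := `|c| `^ b^-1; have z0 : 0 <= z := powR_ge0 _ _.
exists (2 + z); first lra.
apply: le_trans (ler_norm c) _; apply: (@le_trans _ _ (z `^ b)).
  by rewrite /z -powRrM mulVf ?gt_eqF ?powRr1.
by apply: ge0_ler_powR; rewrite ?nnegrE; lra.
Qed.

Lemma ln_le_powR (l d : R) : 0 < l -> 0 < d -> ln l <= l `^ d / d.
Proof.
move=> l0 d0; rewrite ler_pdivlMr // mulrC -ln_powR.
exact/ltW/ln_sublinear/powR_gt0.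
Qed.

Lemma exprn_unbounded (mu c : R) : 1 < mu -> exists n, c <= mu ^+ n.
Proof.
move=> mu1; have bernoulli n : 1 + n%:R * (mu - 1) <= mu ^+ n.
  elim: n => [|n IH]; first by rewrite mul0r addr0.
  rewrite exprS; apply: le_trans (ler_wpM2l (ltW (lt_trans ltr01 mu1)) IH).
  have : 0 <= n%:R * (mu - 1) * (mu - 1) by rewrite !mulr_ge0 //; lra.
  rewrite -natr1; nra.
set n := Num.Def.archi_bound (`|c| / (mu - 1)).
exists n; apply: le_trans (bernoulli n).
have : `|c| / (mu - 1) < n%:R by apply: archi_boundP; rewrite divr_ge0 //; lra.
rewrite ltr_pdivrMr; last lra.
by have := ler_norm c; lra.
Qed.

Lemma near_pinfty_scale (c : R) (P : set R) : 0 < c ->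
  (\forall x \near +oo, P x) -> \forall x \near +oo, P (c * x).
Proof.
move=> c0 [X [_ PX]]; exists (X / c); split; first exact: num_real.
by move=> x; rewrite ltr_pdivrMr // mulrC; exact: PX.
Qed.

Lemma near_pinfty_dilate (P : set R) : (\forall y \near +oo, P y) ->
  \forall x \near +oo, forall l, 1 <= l -> P (l * x).
Proof.
move=> [X [_ PX]]; exists (Num.max X 0); split; first exact: num_real.
move=> x; rewrite gt_max => /andP[Xx x0] l l1; apply: PX.
by apply: lt_le_trans Xx _; rewrite ler_peMl // ltW.
Qed.

End RealFacts.

Definition dilation_ub {R : realType} (h : R -> R) (a C : R) : Prop :=
  forall Lam, 1 < Lam -> \forall x \near +oo,
    forall lam, 1 <= lam <= Lam -> h (lam * x) <= C * lam `^ a * h x.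

Definition dilation_lb {R : realType} (h : R -> R) (b D : R) : Prop :=
  forall Lam, 1 < Lam -> \forall x \near +oo,
    forall lam, 1 <= lam <= Lam -> D * lam `^ b * h x <= h (lam * x).

Section DilationBounds.
Context {R : realType} {h : R -> R}.
Hypothesis h_eventually_gt0 : \forall x \near +oo, 0 < h x.

Lemma alpha_setP a : alpha_set h a <-> exists2 C, 0 < C & dilation_ub h a C.
Proof.
split=> [[C C0 hC]|[C C0 hC]].
  exists (C + 1); first lra.
  move=> Lam Lam1; apply: filterS2 h_eventually_gt0 (hC Lam Lam1 1 ltr01).
  move=> x hx hCx lam lamI; have lam0 : 0 < lam by case/andP: lamI; lra.
  by rewrite -mulrA -ler_pdivrMr ?mulr_gt0 ?powR_gt0 ?hCx.
exists C => // Lam Lam1 eps eps0.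
apply: filterS2 h_eventually_gt0 (hC Lam Lam1) => x hx hCx lam lamI.
have lam0 : 0 < lam by case/andP: lamI; lra.
rewrite ler_pdivrMr ?mulr_gt0 ?powR_gt0 // mulrA (le_trans (hCx _ lamI)) //.
by rewrite ler_wpM2r ?(ltW hx) // ler_wpM2r ?powR_ge0 //; lra.
Qed.

Lemma beta_setP b : beta_set h b <-> exists2 D, 0 < D & dilation_lb h b D.
Proof.
split=> [[D D0 hD]|[D D0 hD]].
  exists (D / 2); first lra.
  move=> Lam Lam1; apply: filterS2 h_eventually_gt0 (hD Lam Lam1 (D / 2) _); last lra.
  move=> x hx hDx lam lamI; have lam0 : 0 < lam by case/andP: lamI; lra.
  have := hDx _ lamI; rewrite ler_pdivlMr ?mulr_gt0 ?powR_gt0 // mulrA.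
  by have -> : D - D / 2 = D / 2 by lra.
exists D => // Lam Lam1 eps eps0.
apply: filterS2 h_eventually_gt0 (hD Lam Lam1) => x hx hDx lam lamI.
have lam0 : 0 < lam by case/andP: lamI; lra.
rewrite ler_pdivlMr ?mulr_gt0 ?powR_gt0 // mulrA (le_trans _ (hDx _ lamI)) //.
by rewrite ler_wpM2r ?(ltW hx) // ler_wpM2r ?powR_ge0 //; lra.
Qed.

Hypothesis h_dilate_nondecr : forall x l, 0 < x -> 1 <= l -> h x <= h (l * x).

Lemma dilation_ub_ge0 a C : 0 < C -> dilation_ub h a C -> 0 <= a.
Proof.
move=> C0 hC; rewrite leNgt; apply/negP => a0.
have [Lam Lam1 CLam] : exists2 Lam, 1 < Lam & C + 1 <= Lam `^ (- a).
  by apply: exists_powR_ge; lra.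
near (pinfty_nbhs R) => x.
have x0 : 0 < x by near: x; exact: nbhs_pinfty_gt.
have hx : 0 < h x by near: x.
have hLam : h (Lam * x) <= C * Lam `^ a * h x.
  by near: x; apply: filterS (hC Lam Lam1) => x; apply; rewrite lexx ltW.
have : h x <= C * Lam `^ a * h x := le_trans (h_dilate_nondecr x0 (ltW Lam1)) hLam.
rewrite -[leLHS]mul1r ler_pM2r // -[a]opprK powRN ler_pdivlMr ?powR_gt0 //; lra.
Unshelve. all: by end_near.
Qed.

Lemma dilation_lb_nonpos b : b <= 0 -> dilation_lb h b 1.
Proof.
move=> b0 Lam _; near=> x => lam /andP[lam1 _].
have x0 : 0 < x by near: x; exact: nbhs_pinfty_gt.
have hx : 0 < h x by near: x.
apply: le_trans (h_dilate_nondecr x0 lam1); rewrite mul1r ler_piMl ?(ltW hx) //.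
by rewrite -[leRHS](powRr0 lam); apply: ler_powR.
Unshelve. all: by end_near.
Qed.

(* Below [mu] the bound follows from monotonicity, with constant [mu^-b]. *)
Lemma dilation_lb_of_large b D mu : 0 <= b -> 1 <= mu ->
  (forall Lam, 1 < Lam -> \forall x \near +oo,
     forall lam, mu <= lam <= Lam -> D * lam `^ b * h x <= h (lam * x)) ->
  dilation_lb h b (Num.min D (mu `^ b)^-1).
Proof.
move=> b0 mu1 hD Lam Lam1; near=> x.
have x0 : 0 < x by near: x; exact: nbhs_pinfty_gt.
have hx : 0 < h x by near: x.
have hDx : forall lam, mu <= lam <= Lam -> D * lam `^ b * h x <= h (lam * x).
  by near: x; exact: hD.
move=> lam /andP[lam1 lamLam].
have lamb0 : 0 <= lam `^ b := powR_ge0 _ _.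
have [mulam|lammu] := leP mu lam.
  apply: le_trans (_ : D * lam `^ b * h x <= _).
    by rewrite ler_wpM2r ?(ltW hx) // ler_wpM2r // ge_min lexx.
  by rewrite hDx ?mulam.
apply: le_trans (h_dilate_nondecr x0 lam1); rewrite ler_piMl ?(ltW hx) //.
apply: le_trans (_ : (mu `^ b)^-1 * lam `^ b <= 1).
  by rewrite ler_wpM2r // ge_min lexx orbT.
rewrite mulrC ler_pdivrMr ?powR_gt0 ?mul1r; last lra.
by apply: ge0_ler_powR; rewrite ?nnegrE //; lra.
Unshelve. all: by end_near.
Qed.

Lemma doubling_of_dilation_lb b D mu : 1 < mu -> 2 <= D * mu `^ b ->
  dilation_lb h b D -> \forall x \near +oo, 2 * h x <= h (mu * x).
Proof.
move=> mu1 Dmu hD; apply: filterS2 h_eventually_gt0 (hD mu mu1) => x hx hDx.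
apply: le_trans (hDx mu _); last by rewrite lexx ltW.
by rewrite ler_pM2r.
Qed.

End DilationBounds.

Section OmegaNuPair.
Context {R : realType} (f g : R -> R).
Hypothesis f_ge0 : forall t, 0 <= f t.
Hypothesis g_ge0 : forall t, 0 <= g t.
Hypothesis g_nondecr : {homo g : s t / s <= t}.
Hypothesis g_cvgy : g x @[x --> +oo] --> +oo.
Hypothesis f_dilate_ge : forall t l, 0 < t -> 1 <= l -> f t + g t * ln l <= f (l * t).
Hypothesis f_dilate_le : forall t l, 0 < t -> 1 <= l -> f (l * t) <= f t + g (l * t) * ln l.

Lemma g_ln_le_f t l : 0 < t -> 1 <= l -> g t * ln l <= f (l * t).
Proof. by move=> t0 l1; apply: le_trans (f_dilate_ge t0 l1); rewrite lerDr. Qed.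

Lemma f_dilate_nondecr t l : 0 < t -> 1 <= l -> f t <= f (l * t).
Proof.
move=> t0 l1; apply: le_trans (f_dilate_ge t0 l1).
by rewrite lerDl mulr_ge0 ?ln_ge0.
Qed.

Lemma g_dilate_nondecr t l : 0 < t -> 1 <= l -> g t <= g (l * t).
Proof. by move=> t0 l1; apply: g_nondecr; rewrite ler_peMl // ltW. Qed.

Lemma g_eventually_gt0 : \forall x \near +oo, 0 < g x.
Proof. exact: cvgry_gt. Qed.

Lemma f_eventually_gt0 : \forall x \near +oo, 0 < f x.
Proof.
near=> x; have x0 : 0 < x by near: x; exact: nbhs_pinfty_gt.
have gx : 0 < g (x / 2) by near: x; exact: near_pinfty_div2 g_eventually_gt0.
have := @g_ln_le_f (x / 2) 2; rewrite [2 * _]mulrC divfK // => /(_ ltac:(lra) ltac:(lra)).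
by apply: lt_le_trans; rewrite mulr_gt0 ?ln_gt0 //; lra.
Unshelve. all: by end_near.
Qed.

Lemma g_le_f_of_dilation_ub a C : 0 <= C -> dilation_ub g a C ->
  \forall x \near +oo, g x <= C * 2 `^ a / ln 2 * f x.
Proof.
move=> C0 gC; have two_gt1 : (1 : R) < 2 by lra.
have ln2 : 0 < ln (2 : R) by rewrite ln_gt0.
near=> x; have x0 : 0 < x by near: x; exact: nbhs_pinfty_gt.
have g2 : g (2 * (x / 2)) <= C * 2 `^ a * g (x / 2).
  by near: x; apply: filterS (near_pinfty_div2 (gC 2 two_gt1)) => y; apply; lra.
have := @g_ln_le_f (x / 2) 2; rewrite [2 * _]mulrC divfK // => /(_ ltac:(lra) ltac:(lra)) gf.
rewrite [2 * _]mulrC divfK // in g2; apply: le_trans g2 _.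
rewrite -!mulrA ler_wpM2l // ler_wpM2l ?powR_ge0 //.
by rewrite [leRHS]mulrC ler_pdivlMr.
Unshelve. all: by end_near.
Qed.

Lemma f_nondecr s t : 0 < s -> s <= t -> f s <= f t.
Proof.
move=> s0 st; have := @f_dilate_nondecr s (t / s) s0.
by rewrite divfK ?gt_eqF // ler_pdivlMr // mul1r; apply.
Qed.

Lemma alpha_set_f_of_g a d : alpha_set g a -> 0 < d -> alpha_set f (a + d).
Proof.
move=> /(alpha_setP g_eventually_gt0) [C C0 gC] d0.
have a0 : 0 <= a := dilation_ub_ge0 g_eventually_gt0 g_dilate_nondecr C0 gC.
have [K K0 gK] : exists2 K, 0 <= K & \forall x \near +oo, g x <= K * f x.
  exists (C * 2 `^ a / ln 2); last exact: g_le_f_of_dilation_ub (ltW C0) gC.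
  by rewrite divr_ge0 ?mulr_ge0 ?powR_ge0 ?ln_ge0 ?(ltW C0) //; lra.
have CKd : 0 <= C * K / d by rewrite divr_ge0 ?mulr_ge0 ?(ltW C0) ?(ltW d0).
apply/(alpha_setP f_eventually_gt0); exists (1 + C * K / d); first lra.
move=> Lam Lam1; near=> x.
have x0 : 0 < x by near: x; exact: nbhs_pinfty_gt.
have gKx : g x <= K * f x by near: x.
have gCx : forall lam, 1 <= lam <= Lam -> g (lam * x) <= C * lam `^ a * g x.
  by near: x; exact: gC.
move=> lam lamI; have /andP[lam1 _] := lamI; have lam0 : 0 < lam by lra.
have lam_ad : lam `^ (a + d) = lam `^ a * lam `^ d.
  by rewrite powRD // lt0r_neq0 // implybT.
have lam_ad1 : 1 <= lam `^ (a + d) by rewrite -(powRr0 lam) ler_powR //; lra.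
apply: le_trans (f_dilate_le x0 lam1) _.
rewrite -mulrA mulrDl mul1r lerD ?ler_peMl //.
have gln : g (lam * x) * ln lam <= C * lam `^ a * (K * f x) * (lam `^ d / d).
  apply: ler_pM; rewrite ?ln_ge0 ?ln_le_powR //.
  apply: le_trans (gCx _ lamI) _.
  by rewrite ler_pM2l ?mulr_gt0 ?powR_gt0.
suff -> : C * K / d * (lam `^ (a + d) * f x) = C * lam `^ a * (K * f x) * (lam `^ d / d).
  exact: gln.
by rewrite lam_ad; ring.
Unshelve. all: by end_near.
Qed.

Lemma f_le_g_of_f_doubling mu : 1 < mu ->
  (\forall x \near +oo, 2 * f x <= f (mu * x)) ->
  \forall x \near +oo, f x <= 2 * ln mu * g x.
Proof.
move=> mu1 fdbl; have mu0 : 0 < mu by lra.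
have mu'0 : 0 < mu^-1 by rewrite invr_gt0.
near=> x; have x0 : 0 < x by near: x; exact: nbhs_pinfty_gt.
have fx : 2 * f (mu^-1 * x) <= f x.
  near: x; apply: filterS (near_pinfty_scale mu'0 fdbl) => x.
  by rewrite mulVKf ?gt_eqF.
have := @f_dilate_le (mu^-1 * x) mu; rewrite mulVKf ?gt_eqF // => /(_ _ (ltW mu1)).
by rewrite mulr_gt0 // => /(_ isT); lra.
Unshelve. all: by end_near.
Qed.

Lemma f_le_g_of_g_doubling mu : 1 < mu ->
  (\forall x \near +oo, 2 * g x <= g (mu * x)) ->
  \forall x \near +oo, f x <= 3 * ln mu * g x.
Proof.
move=> mu1 [X0 [_ gdbl]]; set X := Num.max X0 1; set L := ln mu.
have mu0 : 0 < mu by lra.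
have X1 : 1 <= X by rewrite le_max lexx orbT.
have L0 : 0 < L by rewrite ln_gt0.
have {}gdbl z : X < z -> 2 * g z <= g (mu * z).
  by move=> Xz; apply: gdbl; apply: le_lt_trans Xz; rewrite le_max lexx.
(* Iterate f(mu z) <= f z + L g(mu z) down to X; as g doubles at each step, the g-terms
   sum to at most 2 L g y. *)
have tele n y : X < y -> y <= X * mu ^+ n -> f y <= f (X * mu) + 2 * L * g y.
  elim: n y => [|n IH] y Xy; first by rewrite mulr1; lra.
  have [yXmu|Xmuy] := leP y (X * mu) => yXn.
    have := f_nondecr (_ : 0 < y) yXmu; have := g_ge0 y; nra.
  set z := y / mu; have yE : y = mu * z by rewrite /z mulrC divfK ?gt_eqF.
  have Xz : X < z by rewrite /z ltr_pdivlMr.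
  have zXn : z <= X * mu ^+ n by rewrite /z ler_pdivrMr // -mulrA -exprSr.
  have := IH z Xz zXn; have := ler_wpM2l (ltW L0) (gdbl z Xz).
  have := @f_dilate_le z mu; rewrite -yE -/L => /(_ ltac:(lra) (ltW mu1)); lra.
near=> y.
have Xy : X < y by near: y; exact: nbhs_pinfty_gt (num_real X).
have gy : f (X * mu) <= L * g y.
  by near: y; apply: filterS (cvgry_ge g_cvgy (f (X * mu) / L)) => y; rewrite [L * _]mulrC ler_pdivrMr.
have [n yXn] := exprn_unbounded (X^-1 * y) mu1.
have := tele n y Xy; rewrite -ler_pdivrMl; last lra.
by move=> /(_ yXn); lra.
Unshelve. all: by end_near.
Qed.

Lemma beta_set_f_of_g b : beta_set g b -> beta_set f b.
Proof.
move=> /(beta_setP g_eventually_gt0) [D D0 gD]; apply/(beta_setP f_eventually_gt0).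
have [b0|b0] := leP b 0.
  by exists 1 => //; apply: (dilation_lb_nonpos f_eventually_gt0 f_dilate_nondecr b0).
have [mu mu1 Dmu] : exists2 mu, 1 < mu & 2 / D <= mu `^ b by exact: exists_powR_ge.
have mu0 : 0 < mu by lra.
have mub0 : 0 < mu `^ b := powR_gt0 _ mu0.
have L0 : 0 < ln mu by rewrite ln_gt0.
rewrite ler_pdivrMr // mulrC in Dmu.
have fg := f_le_g_of_g_doubling mu1 (doubling_of_dilation_lb g_eventually_gt0 mu1 Dmu gD).
exists (Num.min (D / (3 * mu `^ b)) (mu `^ b)^-1).
  by rewrite lt_min divr_gt0 ?invr_gt0 ?mulr_gt0.
apply: (dilation_lb_of_large f_eventually_gt0 f_dilate_nondecr (ltW b0) (ltW mu1)).
move=> Lam Lam1; near=> x.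
have x0 : 0 < x by near: x; exact: nbhs_pinfty_gt.
have fgx : f x <= 3 * ln mu * g x by near: x.
have gDx : forall lam, 1 <= lam <= Lam -> D * lam `^ b * g x <= g (lam * x).
  by near: x; exact: gD.
move=> lam /andP[mulam lamLam].
set lam' := lam / mu; have lamE : lam = mu * lam' by rewrite /lam' mulrC divfK ?gt_eqF.
have lam'1 : 1 <= lam' by rewrite /lam' ler_pdivlMr ?mul1r.
have lam'I : 1 <= lam' <= Lam by rewrite lam'1 /lam' ler_pdivrMr //=; nra.
have := @g_ln_le_f (lam' * x) mu; rewrite mulrA -lamE => /(_ _ (ltW mu1)) gf.
apply: le_trans (gf _); last by rewrite mulr_gt0 //; lra.
apply: le_trans (ler_wpM2r (ltW L0) (gDx _ lam'I)).
rewrite lamE powRM ?(ltW mu0); last lra.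
have -> : D / (3 * mu `^ b) * (mu `^ b * lam' `^ b) * f x = D / 3 * lam' `^ b * f x.
  by field; rewrite gt_eqF.
have c0 : 0 <= D / 3 * lam' `^ b by rewrite mulr_ge0 ?powR_ge0 //; lra.
by apply: le_trans (ler_wpM2l c0 fgx) _; lra.
Unshelve. all: by end_near.
Qed.

Lemma beta_set_g_of_f b : beta_set f b -> beta_set g b.
Proof.
move=> /(beta_setP f_eventually_gt0) [D D0 fD]; apply/(beta_setP g_eventually_gt0).
have [b0|b0] := leP b 0.
  by exists 1 => //; apply: (dilation_lb_nonpos g_eventually_gt0 g_dilate_nondecr b0).
have [mu mu1 Dmu] : exists2 mu, 1 < mu & 2 / D <= mu `^ b by exact: exists_powR_ge.
have mu0 : 0 < mu by lra.
have mub0 : 0 < mu `^ b := powR_gt0 _ mu0.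
have L0 : 0 < ln mu by rewrite ln_gt0.
rewrite ler_pdivrMr // mulrC in Dmu.
have fg := f_le_g_of_f_doubling mu1 (doubling_of_dilation_lb f_eventually_gt0 mu1 Dmu fD).
exists (Num.min (D / (2 * mu `^ b)) (mu `^ b)^-1).
  by rewrite lt_min divr_gt0 ?invr_gt0 ?mulr_gt0.
apply: (dilation_lb_of_large g_eventually_gt0 g_dilate_nondecr (ltW b0) (ltW mu1)).
move=> Lam Lam1; near=> x.
have x0 : 0 < x by near: x; exact: nbhs_pinfty_gt.
have fgx : forall l, 1 <= l -> f (l * x) <= 2 * ln mu * g (l * x).
  by near: x; exact: near_pinfty_dilate fg.
have fDx : forall lam, 1 <= lam <= Lam -> D * lam `^ b * f (mu * x) <= f (lam * (mu * x)).
  by near: x; exact: near_pinfty_scale mu0 (fD Lam Lam1).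
move=> lam /andP[mulam lamLam].
set lam' := lam / mu; have lamE : lam = mu * lam' by rewrite /lam' mulrC divfK ?gt_eqF.
have lam'1 : 1 <= lam' by rewrite /lam' ler_pdivlMr ?mul1r.
have lam'I : 1 <= lam' <= Lam by rewrite lam'1 /lam' ler_pdivrMr //=; nra.
have fglam : f (lam * x) <= 2 * ln mu * g (lam * x) by apply: fgx; lra.
have gf := @g_ln_le_f x mu x0 (ltW mu1).
have := fDx _ lam'I; rewrite mulrA [lam' * mu]mulrC -lamE => flam.
rewrite lamE powRM ?(ltW mu0); last lra.
have -> : D / (2 * mu `^ b) * (mu `^ b * lam' `^ b) * g x = D / 2 * lam' `^ b * g x.
  by field; rewrite gt_eqF.
have c0 : 0 <= D * lam' `^ b by rewrite mulr_ge0 ?powR_ge0 //; lra.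
have := ler_wpM2l c0 gf; rewrite -lamE; nra.
Unshelve. all: by end_near.
Qed.

Lemma alpha_idx_le : (alpha_idx f <= alpha_idx g)%E.
Proof.
apply: le_ereal_inf_tmp => _ [a ga <-]; apply/lee_addgt0Pr => d d0.
by rewrite -EFinD; apply: ereal_inf_lbound; exists (a + d) => //; exact: alpha_set_f_of_g.
Qed.

Lemma beta_set_eq : beta_set g = beta_set f.
Proof.
by apply/seteqP; split => b; [exact: beta_set_f_of_g | exact: beta_set_g_of_f].
Qed.

End OmegaNuPair.

Section WeightSequence.
Context {R : realType} (M : nat -> R).
Hypothesis wM : weight_seq M.

Local Notation m := (quot_seq M).

Lemma M_gt0 p : 0 < M p.
Proof. by case: wM. Qed.

Lemma quot_gt0 p : 0 < m p.
Proof. by rewrite divr_gt0 ?M_gt0. Qed.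

Lemma M_succ p : M p.+1 = M p * m p.
Proof. by rewrite mulrC divfK // gt_eqF // M_gt0. Qed.

Lemma quot_nondecr : {homo m : i j / (i <= j)%N >-> i <= j}.
Proof.
apply: nondecnP => p; case: wM => _ _ logconvex _.
have := logconvex p.+1 isT; rewrite /quot_seq /=.
rewrite ler_pdivrMr ?M_gt0 // mulrAC ler_pdivlMr ?M_gt0 //.
by rewrite [M p * _]mulrC expr2.
Qed.

Lemma quot_unbounded t : exists p, t < m p.
Proof.
apply: contrapT => /forallNP quot_le; have {}quot_le p : m p <= t.
  by rewrite leNgt; apply/negP/quot_le.
have t0 : 0 < t by apply: lt_le_trans (quot_gt0 0) (quot_le 0%N).
have M_le p : M p <= t ^+ p.
  elim: p => [|p IH]; first by case: wM => ->.
  by rewrite M_succ exprSr ler_pM ?(ltW (M_gt0 _)) ?(ltW (quot_gt0 _)).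
case: wM => _ _ _ /cvgryPgt/(_ t) [N _ /(_ N.+1 (leqnSn _))] /=.
apply/negP; rewrite -leNgt.
have {1}-> : t = (t ^+ N.+1) `^ (N.+1%:R)^-1.
  by rewrite -powR_mulrn ?ltW // -powRrM mulfV ?powRr1 ?ltW.
by rewrite ge0_ler_powR ?nnegrE ?exprn_ge0 ?(ltW t0) ?(ltW (M_gt0 _)).
Qed.

Definition quot_count t := ex_minn (quot_unbounded t).

Lemma quot_countP t j : (j < quot_count t)%N = (m j <= t).
Proof.
rewrite /quot_count; case: ex_minnP => n tn n_min; apply/idP/idP => [jn|mj].
  by rewrite leNgt; apply/negP => /n_min; rewrite leqNgt jn.
rewrite ltnNge; apply/negP => /quot_nondecr nj.
by have := lt_le_trans tn nj; rewrite ltNge mj.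
Qed.

Lemma quot_count_nondecr : {homo quot_count : s t / s <= t >-> (s <= t)%N}.
Proof.
move=> s t st; rewrite leqNgt quot_countP; apply/negP => ts.
by have := le_trans ts st; rewrite -quot_countP ltnn.
Qed.

Lemma nu_mE t : nu_m m t = (quot_count t)%:R.
Proof.
rewrite /nu_m; have -> : [set j | m j <= t] = `I_(quot_count t).
  by apply/seteqP; split => j /=; rewrite quot_countP.
by rewrite /counting asboolT ?finite_II // (card_fset_set (card_eqxx _)).
Qed.

Definition Mterm t p := t ^+ p / M p.

Lemma Mterm_gt0 t p : 0 < t -> 0 < Mterm t p.
Proof. by move=> t0; rewrite divr_gt0 ?exprn_gt0 ?M_gt0. Qed.

Lemma MtermS t p : Mterm t p.+1 = Mterm t p * (t / m p).
Proof. by rewrite /Mterm M_succ exprSr invfM mulrACA. Qed.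

Lemma ln_MtermZ l t p : 0 < l -> 0 < t ->
  ln (Mterm (l * t) p) = p%:R * ln l + ln (Mterm t p).
Proof.
move=> l0 t0; rewrite /Mterm exprMn -mulrA lnM ?posrE ?exprn_gt0 //.
  by rewrite lnXn // mulr_natl.
by rewrite divr_gt0 ?exprn_gt0 ?M_gt0.
Qed.

Lemma Mterm_le_max t p : 0 < t -> Mterm t p <= Mterm t (quot_count t).
Proof.
move=> t0; set N := quot_count t.
have Mterm_ge0 i : 0 <= Mterm t i by exact/ltW/Mterm_gt0.
have [pN|Np] := leqP p N.
  have : {in [pred i | (i <= N)%N] &, {homo Mterm t : i j / (i <= j)%N >-> i <= j}}.
    apply: nondecn_inP => [i j _ jN k /andP[_ /ltnW /leq_trans]|i _ iN]; first exact.
    rewrite MtermS ler_peMr // ler_pdivlMr ?quot_gt0 // mul1r -quot_countP.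
    exact: iN.
  by move/(_ p N pN (leqnn N) pN).
have : {in [pred i | (N <= i)%N] &, {homo Mterm t : i j /~ (i <= j)%O}}.
  apply: nonincn_inP => [i j Ni _ k /andP[/ltnW + _]|i Ni _]; first exact: leq_trans.
  rewrite MtermS ger_pMr ?Mterm_gt0 // ler_pdivrMr ?quot_gt0 // mul1r ltW //.
  by rewrite ltNge -quot_countP -leqNgt.
by move/(_ p N (ltnW Np) (leqnn N) (ltnW Np)).
Qed.

Lemma omegaME t : 0 < t -> omegaM M t = ln (Mterm t (quot_count t)).
Proof.
move=> t0; rewrite /omegaM t0.
have ub : ubound [set ln (t ^+ p / M p) | p in [set: nat]] (ln (Mterm t (quot_count t))).
  by move=> _ [p _ <-]; rewrite ler_ln ?posrE ?Mterm_gt0 ?Mterm_le_max.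
apply/le_anti/andP; split; first by apply: ge_sup => //; exists (ln (Mterm t 0)), 0%N.
by apply: ub_le_sup; [exists (ln (Mterm t (quot_count t))) | exists (quot_count t)].
Qed.

Lemma omegaM_ge0 t : 0 <= omegaM M t.
Proof.
have [t0|] := ltP 0 t; last by rewrite /omegaM leNgt => /negbTE ->.
rewrite omegaME // -ln1 ler_ln ?posrE ?Mterm_gt0 //.
by apply: le_trans (@Mterm_le_max t 0 t0); rewrite /Mterm expr0; case: wM => ->; rewrite divr1.
Qed.

Lemma omegaM_dilate_ge t l : 0 < t -> 1 <= l ->
  omegaM M t + nu_m m t * ln l <= omegaM M (l * t).
Proof.
move=> t0 l1; have l0 : 0 < l by apply: lt_le_trans l1.
rewrite omegaME // nu_mE addrC -ln_MtermZ // omegaME ?mulr_gt0 //.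
by rewrite ler_ln ?posrE ?Mterm_gt0 ?mulr_gt0 ?Mterm_le_max ?mulr_gt0.
Qed.

Lemma omegaM_dilate_le t l : 0 < t -> 1 <= l ->
  omegaM M (l * t) <= omegaM M t + nu_m m (l * t) * ln l.
Proof.
move=> t0 l1; have l0 : 0 < l by apply: lt_le_trans l1.
rewrite omegaME ?mulr_gt0 // nu_mE ln_MtermZ // omegaME // [leRHS]addrC lerD2l.
by rewrite ler_ln ?posrE ?Mterm_gt0 ?Mterm_le_max.
Qed.

Lemma nu_m_ge0 t : 0 <= nu_m m t.
Proof. by rewrite nu_mE. Qed.

Lemma nu_m_nondecr : {homo nu_m m : s t / s <= t}.
Proof. by move=> s t st; rewrite !nu_mE ler_nat quot_count_nondecr. Qed.

Lemma nu_m_cvgy : nu_m m x @[x --> +oo] --> +oo.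
Proof.
apply/cvgryPge => K; have [n Kn] : exists n : nat, K <= n%:R.
  exists (Num.Def.archi_bound `|K|).
  exact: le_trans (ler_norm K) (ltW (archi_boundP _)).
exists (m n); split; first exact: num_real.
move=> x /ltW mx; rewrite nu_mE (le_trans Kn) // ler_nat.
by apply: ltnW; rewrite quot_countP.
Qed.

End WeightSequence.

Theorem theorem4p4 (R : realType) (M : nat -> R) :
  weight_seq M ->
  ((alpha_idx (omegaM M) <= alpha_idx (nu_m (quot_seq M)))%E /\
   beta_idx (nu_m (quot_seq M)) = beta_idx (omegaM M)).
Proof.
move=> wM.
split; first exact: alpha_idx_le (omegaM_ge0 wM) (nu_m_ge0 wM) (nu_m_nondecr wM)
  (nu_m_cvgy wM) (omegaM_dilate_ge wM) (omegaM_dilate_le wM).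
by rewrite /beta_idx (beta_set_eq (omegaM_ge0 wM) (nu_m_ge0 wM) (nu_m_nondecr wM)
  (nu_m_cvgy wM) (omegaM_dilate_ge wM) (omegaM_dilate_le wM)).
Qed.
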